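(* Let $(S,\mathcal{A},\mu)$ be a complete, $\sigma$-finite measure space. If $X$ is a generalised lush (GL) real Banach space, then $L^1(\mu,X)$ is also GL.
   Context: For a real Banach space $X$, $y^*\in S_{X^*}$ and $\varepsilon>0$, $S(y^*,\varepsilon)=\{z\in B_X:y^*(z)>1-\varepsilon\}$, and $d(x,A)=\inf_{a\in A}\|x-a\|$. $X$ is generalised lush (GL) if for every $x\in S_X$ and every $\varepsilon>0$ there is $y^*\in S_{X^*}$ with $x\in S(y^*,\varepsilon)$ and $d(z,S(y^*,\varepsilon))+d(z,-S(y^*,\varepsilon))<2+\varepsilon$ for every $z\in S_X$. $L^1(\mu,X)$ is the Lebesgue–Bochner space. *)

From mathcomp Require Import all_boot all_algebra.
From mathcomp Require Import all_classical all_reals all_analysis.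
Import GRing.Theory Num.Theory.
Set Implicit Arguments.
Unset Strict Implicit.
Unset Printing Implicit Defensive.
Local Open Scope classical_set_scope.
Local Open Scope ring_scope.

(* Generalised lushness for a (semi)normed real vector space given as a
   subspace [P] of an lmodType [E] equipped with a seminorm [N].  For a normed
   space X one takes P = setT and N = normr; for L^1(mu,X) one takes P = the
   Bochner-integrable functions and N = the L^1 seminorm (quotienting by null
   functions does not change any of the quantities below). *)
Section GL.
Variables (R : realType) (E : lmodType R) (P : set E) (N : E -> R).

Definition linear_functional (f : E -> R) : Prop :=
  (forall x y, P x -> P y -> f (x + y) = f x + f y) /\
  (forall (a : R) x, P x -> f (a *: x) = a * f x).

Definition dual_sphere (f : E -> R) : Prop :=
  linear_functional f /\
  (forall x, P x -> `|f x| <= N x) /\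
  (forall e : R, 0 < e -> exists x, P x /\ N x <= 1 /\ 1 - e < `|f x|).

Definition slice (f : E -> R) (e : R) : set E :=
  [set z | P z /\ N z <= 1 /\ 1 - e < f z].

Definition dist (z : E) (A : set E) : R := inf [set N (z - a) | a in A].

Definition GL_space : Prop :=
  forall x, P x -> N x = 1 -> forall e : R, 0 < e ->
    exists f, dual_sphere f /\ slice f e x /\
      forall z, P z -> N z = 1 ->
        dist z (slice f e) + dist z [set - a | a in slice f e] < 2 + e.
End GL.

Definition GL (R : realType) (X : normedModType R) : Prop :=
  @GL_space R X setT (@Num.norm R X).

Section Bochner.
Variables (R : realType) (d : measure_display) (T : measurableType d)
  (mu : {measure set T -> \bar R}) (X : normedModType R).

Definition simple_function (g : T -> X) : Prop :=
  finite_set (range g) /\ forall y, measurable (g @^-1` [set y]).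

Definition strongly_measurable (f : T -> X) : Prop :=
  exists g : nat -> T -> X, (forall n, simple_function (g n)) /\
    {ae mu, forall x, g n x @[n --> \oo] --> f x}.

Definition L1_set : set (T -> X) :=
  [set f | strongly_measurable f /\ (\int[mu]_x (`|f x|%:E) < +oo)%E].

Definition L1_norm (f : T -> X) : R := fine (\int[mu]_x (`|f x|%:E)).
End Bochner.

From mathcomp Require Import all_boot all_order all_algebra.
From mathcomp Require Import all_classical all_reals all_analysis.
From mathcomp Require Import measurable_realfun lra.
Import GRing.Theory Num.Def Num.Theory Order.TTheory.
Import numFieldNormedType.Exports.
Set Implicit Arguments.
Unset Strict Implicit.
Unset Printing Implicit Defensive.
Local Open Scope classical_set_scope.
Local Open Scope ring_scope.

(* Approximate x by a simple function t and, for each of the finitely many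
   values u of t, take a GL functional Phi u of X for the direction of u.  Then
   f g = \int Phi (t s) (g s) is a norm-one functional on L^1(mu, X) whose slice
   contains x, since Phi (t s) (x s) >= (1 - del) |x s| - 2 |x s - t s|.  For z
   in the unit sphere, approximate z by a simple t' and pick, for each pair of
   values (t s, t' s), points v, w in the slice of Phi (t s) with
   |dir (t' s) - v| + |dir (t' s) + w| < 2 + del.  Then (1 - del) |t'| v and
   (1 - del) |t'| w lie in the slice of f, and integrating the pointwise
   triangle inequality yields the GL estimate at z.  Completeness of mu only
   serves to make a.e. limits of measurable functions measurable. *)

Section dist.
Context (R : realType) (E : lmodType R) (N : E -> R).
Hypothesis N_ge0 : forall b, 0 <= N b.

Lemma dist_le (A : set E) z a : A a -> dist N z A <= N (z - a).
Proof.
move=> Aa; apply: ge_inf; last by exists a.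
by exists 0 => _ [b _ <-].
Qed.

Lemma exists_lt_dist_add (A : set E) z (e : R) : A !=set0 -> 0 < e ->
  exists2 a, A a & N (z - a) < dist N z A + e.
Proof.
move=> [a0 Aa0] e0.
have infA : has_inf [set N (z - a) | a in A].
  by split; [exists (N (z - a0)), a0|exists 0 => _ [b _ <-]].
by have [_ [a Aa <-]] := inf_adherent e0 infA; exists a.
Qed.

Lemma exists_near_pair (A : set E) z (c : R) : A !=set0 ->
  dist N z A + dist N z [set - a | a in A] < c ->
  exists a b, [/\ A a, A b & N (z - a) + N (z + b) < c].
Proof.
move=> A0 hc; pose eta := (c - (dist N z A + dist N z [set - a | a in A])) / 2.
have eta0 : 0 < eta by rewrite divr_gt0 // subr_gt0.
have [a Aa ha] := exists_lt_dist_add z A0 eta0.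
have [_ [b Ab <-]] : exists2 b', [set - a | a in A] b' &
    N (z - b') < dist N z [set - a | a in A] + eta.
  by apply: exists_lt_dist_add eta0; have [a0 Aa0] := A0; exists (- a0), a0.
rewrite opprK => hb; exists a, b; split => //.
have : eta * 2 = c - (dist N z A + dist N z [set - a | a in A]).
  by rewrite divfK // pnatr_eq0.
lra.
Qed.

End dist.

Section normed.
Context (R : realType) (X : normedModType R).

Lemma dual_sphere_norming (phi : X -> R) (e : R) :
  dual_sphere setT normr phi -> 0 < e -> exists w, `|w| <= 1 /\ 1 - e < phi w.
Proof.
move=> [[_ phiZ] [_ /(_ e) norming]] /norming[w [_ [w1 hw]]].
have [phiw0|phiw0] := leP 0 (phi w); first by exists w; rewrite -(ger0_norm phiw0).
exists (- w); rewrite normrN -scaleN1r phiZ // mulN1r.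
by rewrite -(ltr0_norm phiw0).
Qed.

(* [e0] is an arbitrary unit vector, used as the direction of [0]. *)
Definition unit_dir (e0 u : X) : X := if u == 0 then e0 else `|u|^-1 *: u.

Lemma norm_unit_dir e0 u : `|e0| = 1 -> `|unit_dir e0 u| = 1.
Proof. by rewrite /unit_dir; case: eqP => // /eqP u0 _; exact: normfZV. Qed.

Lemma unit_dirK e0 u : `|u| *: unit_dir e0 u = u.
Proof.
rewrite /unit_dir; case: eqP => [->|/eqP u0]; first by rewrite normr0 scale0r.
by rewrite scalerA divff ?normr_eq0 // scale1r.
Qed.

Lemma ler_norm_scale_sub (u v : X) (a b : R) : 0 <= b <= a -> `|v| <= 1 ->
  `|a *: u - b *: v| <= a * `|u - v| + (a - b).
Proof.
move=> /andP[b0 ba] v1; have ab0 : 0 <= a - b by rewrite subr_ge0.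
have -> : a *: u - b *: v = a *: (u - v) + (a - b) *: v.
  by rewrite scalerBr scalerBl addrA subrK.
apply: le_trans (ler_normD _ _) _.
rewrite !normrZ (ger0_norm ab0) ger0_norm ?(le_trans b0 ba) // lerD2l.
by rewrite ler_piMr.
Qed.

Lemma ler_dist_scale_pair (z u v w : X) (a b : R) : 0 <= b <= a ->
  `|v| <= 1 -> `|w| <= 1 ->
  `|z - b *: v| + `|z + b *: w| <=
  2 * `|z - a *: u| + a * (`|u - v| + `|u + w|) + 2 * (a - b).
Proof.
move=> bab v1 w1.
have := ler_distD (a *: u) z (b *: v); have := ler_norm_scale_sub u bab v1.
have := ler_distD (a *: u) z (- (b *: w)).
have := @ler_norm_scale_sub u (- w) a b bab; rewrite normrN scalerN !opprK.
lra.
Qed.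

Lemma le_slice_unit_dir (phi : X -> R) (e0 u : X) (del : R) :
  dual_sphere setT normr phi -> slice setT normr phi del (unit_dir e0 u) ->
  (1 - del) * `|u| <= phi u.
Proof.
move=> [[_ phiZ] _] [_ [_ /ltW hu]].
by rewrite -{2}(unit_dirK e0 u) phiZ // mulrC ler_wpM2l.
Qed.

Lemma GL_fibrewise (e0 : X) (del : R) : GL X -> `|e0| = 1 -> 0 < del ->
  exists (Phi : X -> X -> R) (V W : X -> X -> X),
  (forall u, dual_sphere setT normr (Phi u) /\
    slice setT normr (Phi u) del (unit_dir e0 u)) /\
  (forall u u', [/\ slice setT normr (Phi u) del (V u u'),
    slice setT normr (Phi u) del (W u u') &
    `|unit_dir e0 u' - V u u'| + `|unit_dir e0 u' + W u u'| < 2 + del]).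
Proof.
move=> GLX e01 del0.
have /choice[Phi HPhi] := fun u => GLX (unit_dir e0 u) I (norm_unit_dir u e01) del del0.
have /choice[VW HVW] : forall p : X * X, exists q : X * X,
    [/\ slice setT normr (Phi p.1) del q.1, slice setT normr (Phi p.1) del q.2 &
    `|unit_dir e0 p.2 - q.1| + `|unit_dir e0 p.2 + q.2| < 2 + del].
  move=> [u u']; have [|a [b [Sa Sb ab]]] := exists_near_pair (@normr_ge0 _ _)
    _ ((HPhi u).2.2 _ I (norm_unit_dir u' e01)).
    by exists (unit_dir e0 u); exact: (HPhi u).2.1.
  by exists (a, b).
exists Phi, (fun u u' => (VW (u, u')).1), (fun u u' => (VW (u, u')).2).
by split => [u|u u']; [have [? [? _]] := HPhi u|exact: HVW (u, u')].
Qed.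

End normed.

Section simple_map.
Context d (T : measurableType d).

(* The [simple_function] of the statement, for an arbitrary codomain, so that
   simple maps can be paired and composed. *)
Definition simple_map {Y : Type} (g : T -> Y) : Prop :=
  finite_set (range g) /\ forall y, measurable (g @^-1` [set y]).

Lemma simple_map_preimage Y (g : T -> Y) B :
  simple_map g -> measurable (g @^-1` B).
Proof.
move=> [fg mg].
have -> : g @^-1` B = \bigcup_(y in range g `&` B) g @^-1` [set y].
  apply/seteqP; split => [s Bs|s [y [[s' _ <-] By] /= ->]] //=.
  by exists (g s) => //; split => //; exists s.
apply: fin_bigcup_measurable => //.
exact: sub_finite_set (@subIsetl _ _ _) fg.
Qed.

Lemma simple_map2 Y Z W (g1 : T -> Y) (g2 : T -> Z) (F : Y -> Z -> W) :
  simple_map g1 -> simple_map g2 -> simple_map (fun s => F (g1 s) (g2 s)).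
Proof.
move=> [f1 m1] sg2; split.
  apply: sub_finite_set (finite_image2 F f1 sg2.1) => _ [s _ <-].
  by exists (g1 s); [exists s|exists (g2 s) => //; exists s].
move=> w.
have -> : (fun s => F (g1 s) (g2 s)) @^-1` [set w] =
    \bigcup_(u in range g1) (g1 @^-1` [set u] `&` g2 @^-1` [set z | F u z = w]).
  apply/seteqP; split => [s /= <-|s [u _ /= [-> <-]]] //.
  by exists (g1 s) => //; exists s.
apply: fin_bigcup_measurable => // u _.
by apply: measurableI; [exact: m1|exact: simple_map_preimage].
Qed.

Lemma simple_map_comp Y Z (g : T -> Y) (F : Y -> Z) :
  simple_map g -> simple_map (fun s => F (g s)).
Proof. by move=> sg; exact: (simple_map2 (fun a (_ : Y) => F a) sg sg). Qed.

Lemma simple_map_cst Y (y : Y) : simple_map (fun _ : T => y).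
Proof.
split; first by apply: sub_finite_set (finite_set1 y) => _ [s _ <-].
by move=> z; rewrite preimage_cst; case: ifPn.
Qed.

Lemma simple_map_asbool (C : set T) : measurable C -> simple_map (fun s => `[< C s >]).
Proof.
move=> mC; split.
  apply: (sub_finite_set (B := [set true; false])); last exact: finite_set2.
  by move=> [] _; [left|right].
case; [rewrite (_ : _ @^-1` _ = C) // | rewrite (_ : _ @^-1` _ = ~` C)].
- by apply/seteqP; split => s /= /asboolP.
- exact: measurableC.
- by apply/seteqP; split => s /= => [/negbT/asboolPn|/asboolPn/negbTE].
Qed.

Lemma simple_map_measurable_fun d' (Y : measurableType d') (g : T -> Y) :
  simple_map g -> measurable_fun setT g.
Proof. by move=> sg _ B _; rewrite setTI; exact: simple_map_preimage. Qed.

End simple_map.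

Lemma nonexpansive_cvg (R : realType) (X Y : normedModType R) (F : X -> Y)
    (u : nat -> X) (y : X) :
  (forall w w', `|F w - F w'| <= `|w - w'|) ->
  u n @[n --> \oo] --> y -> F (u n) @[n --> \oo] --> F y.
Proof.
move=> FL /cvgrPdist_lt uy; apply/cvgrPdist_lt => e e0.
by apply: filterS (uy _ e0) => n; apply: le_lt_trans (FL _ _).
Qed.

Section real_integrable.
Context (R : realType) d (T : measurableType d) (mu : {measure set T -> \bar R}).

Definition rintegrable (h : T -> R) := mu.-integrable setT (EFin \o h).

Lemma rintegrable_measurable_fun (h : T -> R) : rintegrable h -> measurable_fun setT h.
Proof. by move=> /integrableP[/measurable_EFinP]. Qed.

Lemma le_rintegrable (h k : T -> R) : measurable_fun setT h ->
  (forall s, `|h s| <= k s) -> rintegrable k -> rintegrable h.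
Proof.
move=> mh hk; apply: le_integrable => //; first exact/measurable_EFinP.
by move=> s _ /=; rewrite lee_fin (le_trans (hk s)) // ler_norm.
Qed.

Lemma rintegrableD (h k : T -> R) : rintegrable h -> rintegrable k ->
  rintegrable (fun s => h s + k s).
Proof. by move=> ih ik; exact: eq_integrable (integrableD measurableT ih ik). Qed.

Lemma rintegrableB (h k : T -> R) : rintegrable h -> rintegrable k ->
  rintegrable (fun s => h s - k s).
Proof. by move=> ih ik; exact: eq_integrable (integrableB measurableT ih ik). Qed.

Lemma rintegrableZl (c : R) (h : T -> R) :
  rintegrable h -> rintegrable (fun s => c * h s).
Proof. by move=> ih; exact: eq_integrable (integrableZl measurableT c ih). Qed.

Lemma rintegrable_norm (h : T -> R) : rintegrable h -> rintegrable (fun s => `|h s|).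
Proof. exact: integrable_norm. Qed.

Hypothesis mu_complete : measure_is_complete mu.

Lemma ae_cvg_measurable_fun (h : (T -> R)^nat) (k : T -> R) :
  (forall n, measurable_fun setT (h n)) ->
  {ae mu, forall s, h ^~ s @ \oo --> k s} -> measurable_fun setT k.
Proof.
move=> mh [N [mN N0 sN]] _ B mB; rewrite setTI.
have mk : measurable_fun (~` N) k.
  apply: (measurable_fun_cvg (h := h)) => [n|s Ns].
    exact: measurable_funS (mh n).
  by apply: contrapT => hs; apply: Ns; apply: sN.
rewrite -(setIT (k @^-1` B)) -(setUCl N) setIUr.
apply: measurableU; last by apply: mu_complete; exists N; split => //; exact: subIsetr.
by rewrite setIC; exact: mk (measurableC mN) B mB.
Qed.

Lemma strongly_measurable_measurable_fun (X : normedModType R) Y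
    (y : T -> X) (t : T -> Y) (F : Y -> X -> R) :
  strongly_measurable mu y -> simple_map t ->
  (forall u w w', `|F u w - F u w'| <= `|w - w'|) ->
  measurable_fun setT (fun s => F (t s) (y s)).
Proof.
move=> [g [sg cg]] st FL.
apply: (@ae_cvg_measurable_fun (fun n s => F (t s) (g n s))) => [n|].
  by apply: simple_map_measurable_fun; apply: simple_map2 => //; exact: sg.
by apply: filterS cg => s; exact: nonexpansive_cvg.
Qed.

End real_integrable.

Section L1.
Context (R : realType) d (T : measurableType d) (mu : {measure set T -> \bar R}).
Context (X : normedModType R).
Implicit Types (y g k : T -> X).

Lemma L1_norm_ge0 g : 0 <= L1_norm mu g.
Proof. by rewrite fine_ge0 // integral_ge0 // => s _; rewrite lee_fin. Qed.

Lemma simple_norm_rintegrable g (c : T -> R) : simple_map g ->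
  (forall s, `|g s| <= c s) -> rintegrable mu c -> rintegrable mu (fun s => `|g s|).
Proof.
move=> sg gc; apply: le_rintegrable => [|s]; last by rewrite normr_id.
exact/simple_map_measurable_fun/(simple_map_comp _ sg).
Qed.

Lemma simple_L1_set g : simple_map g -> rintegrable mu (fun s => `|g s|) -> L1_set mu g.
Proof.
move=> sg /integrableP[_ ig]; split.
  by exists (fun=> g); split => //; apply: aeW => s; exact: cvg_cst.
by move: ig; under eq_integral do rewrite /= ?abse_EFin normr_id.
Qed.

Lemma L1_norm_eq1_exists_unit y : L1_norm mu y = 1 ->
  exists e0 : X, `|e0| = 1.
Proof.
move=> Ny; suff [s ys] : exists s, y s != 0.
  by exists (`|y s|^-1 *: y s); exact: normfZV.
apply: contrapT => y0; have {}y0 s : y s = 0.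
  by apply/eqP; apply: contrapT => ys; apply: y0; exists s; exact/negP.
move: Ny; rewrite /L1_norm integral0_eq => [|s _]; last by rewrite y0 normr0.
by move/esym/eqP; rewrite oner_eq0.
Qed.

Hypothesis mu_complete : measure_is_complete mu.

Lemma L1_set_norm_rintegrable y : L1_set mu y -> rintegrable mu (fun s => `|y s|).
Proof.
move=> [sy fy]; apply/integrableP; split.
  apply/measurable_EFinP.
  have := strongly_measurable_measurable_fun mu_complete
    (F := fun (_ : unit) w => `|w|) sy (simple_map_cst T tt).
  by apply=> _ w w'; exact: ler_dist_dist.
by under eq_integral do rewrite /= ?abse_EFin normr_id.
Qed.

Lemma L1_set_sub_simple_rintegrable y k : L1_set mu y -> simple_map k ->
  rintegrable mu (fun s => `|k s|) -> rintegrable mu (fun s => `|y s - k s|).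
Proof.
move=> Ly sk ik.
apply: (@le_rintegrable _ _ _ _ _ (fun s => `|y s| + `|k s|)); last first.
- exact/rintegrableD/ik/L1_set_norm_rintegrable.
- by move=> s; rewrite normr_id ler_normB.
apply: (strongly_measurable_measurable_fun mu_complete
  (F := fun u w => `|w - u|) Ly.1 sk) => u w w'.
apply: le_trans (ler_dist_dist _ _) _.
by rewrite opprB addrA subrK.
Qed.

Lemma L1_norm_simple_approx y k : L1_set mu y -> rintegrable mu (fun s => `|k s|) ->
  rintegrable mu (fun s => `|y s - k s|) ->
  L1_norm mu y - \int[mu]_(s in setT) `|y s - k s| <= \int[mu]_(s in setT) `|k s|
  <= L1_norm mu y + \int[mu]_(s in setT) `|y s - k s|.
Proof.
move=> Ly ik iyk; have iy := L1_set_norm_rintegrable Ly.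
rewrite /L1_norm -[fine _]/(\int[mu]_(s in setT) `|y s|).
rewrite -!(RintegralB, RintegralD) //; apply/andP; split; apply: le_Rintegral => //.
- exact: rintegrableB.
- move=> s _; rewrite lerBlDr; apply: le_trans (ler_normD _ _).
  by rewrite addrC subrK.
- exact: rintegrableD.
- move=> s _; have := ler_normB (y s) (y s - k s).
  by rewrite opprB addrCA subrr addr0.
Qed.

Lemma simple_approx_norm_rintegrable y k : L1_set mu y -> simple_map k ->
  rintegrable mu (fun s => `|y s - k s|) -> rintegrable mu (fun s => `|k s|).
Proof.
move=> Ly sk iyk.
apply: (simple_norm_rintegrable sk (c := fun s => `|y s| + `|y s - k s|)) => [s|].
  by have := ler_normB (y s) (y s - k s); rewrite opprB addrCA subrr addr0.
exact/rintegrableD/iyk/L1_set_norm_rintegrable.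
Qed.

Lemma L1_set_dominated_simple_approx y : L1_set mu y ->
  exists h : nat -> T -> X, [/\ forall n, simple_map (h n),
    forall n s, `|h n s| <= 2 * `|y s| &
    {ae mu, forall s, h n s @[n --> \oo] --> y s}].
Proof.
move=> [[g [sg cg]] _].
have sy : strongly_measurable mu y by exists g.
pose C n := [set s | `|g n s| / 2 <= `|y s|].
have mC n : measurable (C n).
  have mF : measurable_fun setT (fun s => `|y s| - `|g n s| / 2).
    apply: (strongly_measurable_measurable_fun mu_complete
      (F := fun u w => `|w| - `|u| / 2) sy (sg n)) => u w w'.
    by rewrite opprB addrA subrK ler_dist_dist.
  rewrite (_ : C n = setT `&` (fun s => `|y s| - `|g n s| / 2) @^-1` `[0, +oo[).
    exact: mF measurableT _ (measurable_itv _).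
  apply/seteqP; split => s /=; rewrite in_itv /= andbT subr_ge0 //.
  by case.
(* Truncation keeps the limit: where y s != 0, eventually |g n s - y s| < |y s|. *)
pose h n s := if `[< C n s >] then g n s else 0.
have hy n s : `|h n s| <= 2 * `|y s|.
  rewrite /h; case: ifPn => [/asboolP hC|_]; last by rewrite normr0 mulr_ge0.
  by rewrite /C /= in hC; lra.
exists h; split => // [n|].
  exact: (simple_map2 (fun u (b : bool) => if b then u else 0)
    (sg n) (simple_map_asbool (mC n))).
apply: filterS cg => s /= gs.
have [ys0|ys0] := eqVneq (y s) 0.
  rewrite ys0; apply: cvg_near_cst; apply: nearW => n.
  by apply/eqP; rewrite -normr_le0 -(mulr0 2) -(normr0 X) -ys0 hy.
have nys : 0 < `|y s| by rewrite normr_gt0.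
apply/cvgrPdist_lt => e e0; move/cvgrPdist_lt : gs => gs.
apply: filterS2 (gs _ e0) (gs _ nys) => n gse gsy.
rewrite /h ifT //; apply/asboolP; rewrite /C /=.
have := ler_normB (y s) (y s - g n s); rewrite opprB addrCA subrr addr0.
lra.
Qed.

Lemma simple_dense y (del : R) : L1_set mu y -> 0 < del ->
  exists t : T -> X, [/\ simple_map t, rintegrable mu (fun s => `|y s - t s|) &
    \int[mu]_(s in setT) `|y s - t s| < del].
Proof.
move=> Ly del0; have [h [sh hy cvh]] := L1_set_dominated_simple_approx Ly.
have iy := L1_set_norm_rintegrable Ly.
have ih n : rintegrable mu (fun s => `|y s - h n s|).
  apply: L1_set_sub_simple_rintegrable => //.
  exact: simple_norm_rintegrable (hy n) (rintegrableZl 2 iy).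
have fcv : {ae mu, forall s, setT s ->
    (fun n => (`|y s - h n s|)%:E) @ \oo --> (cst 0%E : T -> \bar R) s}.
  apply: filterS cvh => s hs _; apply/fine_cvgP; split; first exact: nearW.
  have := nonexpansive_cvg (F := fun w => `|y s - w|) _ hs.
  rewrite subrr normr0; apply => w w'; apply: le_trans (ler_dist_dist _ _) _.
  by rewrite opprB addrC addrA subrK distrC.
have fg : {ae mu, forall s n, setT s -> (`|(`|y s - h n s|)%:E| <= (3 * `|y s|)%:E)%E}.
  apply: aeW => s n _; rewrite /= lee_fin normr_id.
  by apply: le_trans (ler_normB _ _) _; have := hy n s; lra.
have [_ _ cvi] := dominated_convergence measurableT
  (fun n => (measurable_EFinP _ _).2 (rintegrable_measurable_fun (ih n)))
  (measurable_cst _) fcv (rintegrableZl 3 iy) fg.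
rewrite /= integral0 in cvi.
have del0E : (0 < del%:E)%E by rewrite lte_fin.
have [N _ /(_ N (leqnn N)) /= hN] := cvi _ (open_ereal_lt' del0E).
exists (h N); split => //.
by rewrite -lte_fin fineK //; exact: integrable_fin_num (ih N).
Qed.

Lemma L1_norm_scaled_pair_le (e0 : X) (z t' v w : T -> X) (del : R) :
  L1_set mu z -> simple_map t' -> simple_map v -> simple_map w ->
  rintegrable mu (fun s => `|t' s|) -> rintegrable mu (fun s => `|z s - t' s|) ->
  0 <= del <= 1 ->
  (forall s, `|v s| <= 1) -> (forall s, `|w s| <= 1) ->
  (forall s, `|unit_dir e0 (t' s) - v s| + `|unit_dir e0 (t' s) + w s| <= 2 + del) ->
  L1_norm mu (z - (fun s => ((1 - del) * `|t' s|) *: v s)) +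
  L1_norm mu (z + (fun s => ((1 - del) * `|t' s|) *: w s)) <=
  2 * \int[mu]_(s in setT) `|z s - t' s| + (2 + 3 * del) * \int[mu]_(s in setT) `|t' s|.
Proof.
move=> Lz st' sv sw it' izt /andP[d0 d1] v1 w1 uvw.
pose c s := (1 - del) * `|t' s|.
have ic : rintegrable mu c by exact: rintegrableZl.
have c_le s : 0 <= c s <= `|t' s| by rewrite mulr_ge0 ?ler_piMl //=; lra.
have izk (k : T -> X) : simple_map k -> (forall s, `|k s| <= 1) ->
    rintegrable mu (fun s => `|z s - c s *: k s|).
  move=> sk k1; have sck : simple_map (fun s => c s *: k s).
    exact: (simple_map2 (fun u w => ((1 - del) * `|u|) *: w) st' sk).
  apply: (L1_set_sub_simple_rintegrable Lz sck).
  apply: (simple_norm_rintegrable sck _ ic) => s.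
  by rewrite normrZ ger0_norm ?mulr_ge0 ?ler_piMr ?mulr_ge0 //=; lra.
have izv := izk v sv v1.
have izw : rintegrable mu (fun s => `|z s + c s *: w s|).
  apply: eq_integrable (izk _ (simple_map_comp -%R sw) _) => //= [s _|s].
    by rewrite scalerN opprK.
  by rewrite normrN.
rewrite -[L1_norm _ (z - _)]/(\int[mu]_(s in setT) `|z s - c s *: v s|).
rewrite -[L1_norm _ (z + _)]/(\int[mu]_(s in setT) `|z s + c s *: w s|).
rewrite -!RintegralZl // -!RintegralD //; try exact: rintegrableZl.
apply: le_Rintegral => //; first exact: rintegrableD.
  by apply: rintegrableD; exact: rintegrableZl.
move=> s _; have := uvw s.
have := ler_dist_scale_pair (z s) (unit_dir e0 (t' s)) (c_le s) (v1 s) (w1 s).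
rewrite unit_dirK /c; have := normr_ge0 (t' s).
nra.
Qed.

End L1.

Section integral_functional.
Context (R : realType) d (T : measurableType d) (mu : {measure set T -> \bar R}).
Context (X : normedModType R).
Hypothesis mu_complete : measure_is_complete mu.
Variables (Phi : X -> X -> R) (t : T -> X).
Hypothesis Phi_sphere : forall u, dual_sphere setT normr (Phi u).
Hypothesis t_simple : simple_map t.

Let PhiD u w w' : Phi u (w + w') = Phi u w + Phi u w'.
Proof. exact: (Phi_sphere u).1.1. Qed.

Let PhiZ u a w : Phi u (a *: w) = a * Phi u w.
Proof. exact: (Phi_sphere u).1.2. Qed.

Let Phi_le u w : `|Phi u w| <= `|w|.
Proof. exact: (Phi_sphere u).2.1. Qed.

Let PhiB u w w' : Phi u (w - w') = Phi u w - Phi u w'.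
Proof. by rewrite PhiD -scaleN1r PhiZ mulN1r. Qed.

Local Notation L1 := (L1_set mu (X:=X)).
Local Notation normL1 := (L1_norm mu (X:=X)).

Definition integral_functional (g : T -> X) : R :=
  \int[mu]_(s in setT) Phi (t s) (g s).

Lemma integral_functional_rintegrable g : L1_set mu g ->
  rintegrable mu (fun s => Phi (t s) (g s)).
Proof.
move=> Lg; apply: le_rintegrable (L1_set_norm_rintegrable mu_complete Lg) => //.
apply: (strongly_measurable_measurable_fun mu_complete Lg.1 t_simple).
by move=> u w w'; rewrite -PhiB.
Qed.

Lemma integral_functional_linear : linear_functional L1 integral_functional.
Proof.
split => [g g' Lg Lg'|a g Lg]; rewrite /integral_functional.
  rewrite -RintegralD //; try exact: integral_functional_rintegrable.
  by apply: eq_Rintegral => s _; rewrite PhiD.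
rewrite -RintegralZl //; last exact: integral_functional_rintegrable.
by apply: eq_Rintegral => s _; rewrite PhiZ.
Qed.

Lemma normr_integral_functional_le g : L1_set mu g ->
  `|integral_functional g| <= L1_norm mu g.
Proof.
move=> Lg; have iPg := integral_functional_rintegrable Lg.
apply: le_trans (le_normr_Rintegral measurableT iPg) _.
apply: le_Rintegral => //; first exact: rintegrable_norm.
exact: L1_set_norm_rintegrable.
Qed.

Lemma scaled_slice_integral_functional (t' v : T -> X) (a e e' : R) :
  simple_map t' -> simple_map v -> rintegrable mu (fun s => `|t' s|) -> 0 <= a ->
  (forall s, `|v s| <= 1 /\ 1 - e' <= Phi (t s) (v s)) ->
  a * \int[mu]_(s in setT) `|t' s| <= 1 ->
  1 - e < (1 - e') * (a * \int[mu]_(s in setT) `|t' s|) ->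
  slice L1 normL1 integral_functional e (fun s => (a * `|t' s|) *: v s).
Proof.
move=> st' sv it' a0 hv norm_le slice_gt.
have ia := rintegrableZl a it'.
have kb s : `|(a * `|t' s|) *: v s| <= a * `|t' s|.
  by rewrite normrZ ger0_norm ?mulr_ge0 // ler_piMr ?mulr_ge0 //; case: (hv s).
have sk : simple_map (fun s => (a * `|t' s|) *: v s).
  exact: (simple_map2 (fun u w => (a * `|u|) *: w) st' sv).
have ik := simple_norm_rintegrable sk kb ia.
have Lk := simple_L1_set sk ik.
split => //; split.
  apply: le_trans norm_le; rewrite -RintegralZl //.
  by apply: le_Rintegral => // s _; exact: kb.
apply: lt_le_trans slice_gt _; rewrite -!RintegralZl //.
apply: le_Rintegral => //; first exact: rintegrableZl.
  exact: integral_functional_rintegrable.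
move=> s _ /=; rewrite PhiZ mulrC ler_wpM2l ?mulr_ge0 //.
by case: (hv s).
Qed.

Lemma integral_functional_dual_sphere : rintegrable mu (fun s => `|t s|) ->
  0 < \int[mu]_(s in setT) `|t s| ->
  dual_sphere L1 normL1 integral_functional.
Proof.
move=> it m0; split; first exact: integral_functional_linear.
split => [g Lg|e e0]; first exact: normr_integral_functional_le.
have /choice[W HW] : forall u, exists w, `|w| <= 1 /\ 1 - e / 2 < Phi u w.
  by move=> u; apply: dual_sphere_norming; rewrite ?divr_gt0.
set m := \int[mu]_(s in setT) `|t s|.
have mV : m^-1 * m = 1 by rewrite mulVf // gt_eqF.
have : slice L1 normL1 integral_functional e
    (fun s => (m^-1 * `|t s|) *: W (t s)).
  apply: (scaled_slice_integral_functional (e' := e / 2) t_simple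
    (simple_map_comp W t_simple) it).
  - by rewrite invr_ge0 ltW.
  - by move=> s; have [w1 /ltW hw] := HW (t s).
  - by rewrite mV.
  - by rewrite mV mulr1; lra.
move=> [Lg [g1 hg]]; exists (fun s => (m^-1 * `|t s|) *: W (t s)); do !split => //.
exact: lt_le_trans hg (ler_norm _).
Qed.

Lemma integral_functional_lower_bound (x : T -> X) (del : R) : L1_set mu x ->
  rintegrable mu (fun s => `|x s - t s|) -> 0 <= del <= 1 ->
  (forall u, (1 - del) * `|u| <= Phi u u) ->
  (1 - del) * L1_norm mu x - 2 * \int[mu]_(s in setT) `|x s - t s| <=
  integral_functional x.
Proof.
move=> Lx ixt /andP[d0 d1] Phi_self.
have ix := L1_set_norm_rintegrable mu_complete Lx.
rewrite /L1_norm -[fine _]/(\int[mu]_(s in setT) `|x s|) -!RintegralZl //.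
rewrite -RintegralB //; try exact: rintegrableZl.
apply: le_Rintegral => //; first by apply: rintegrableB; exact: rintegrableZl.
  exact: integral_functional_rintegrable.
move=> s _; have := Phi_self (t s).
have := Phi_le (t s) (x s - t s); rewrite PhiB ler_norml => /andP[Phi_xt _].
have := ler_normD (t s) (x s - t s); rewrite addrCA subrr addr0.
have := normr_ge0 (x s - t s).
nra.
Qed.

Lemma integral_functional_GL_bound (e0 : X) (V W : X -> X -> X) (del eps : R) :
  0 < del -> del <= 1 / 10 -> 10 * del <= eps ->
  (forall u u', [/\ slice setT normr (Phi u) del (V u u'),
    slice setT normr (Phi u) del (W u u') &
    `|unit_dir e0 u' - V u u'| + `|unit_dir e0 u' + W u u'| < 2 + del]) ->
  forall z, L1_set mu z -> L1_norm mu z = 1 ->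
  dist normL1 z (slice L1 normL1 integral_functional eps) +
  dist normL1 z [set - a | a in slice L1 normL1 integral_functional eps] < 2 + eps.
Proof.
move=> del0 del1 deleps VW z Lz Nz.
have [t' [st' izt zt]] := simple_dense mu_complete Lz del0.
have it' := simple_approx_norm_rintegrable mu_complete Lz st' izt.
have /andP[] := L1_norm_simple_approx mu_complete Lz it' izt.
rewrite Nz; set m := \int[mu]_(s in setT) `|t' s| => m_lo m_hi.
pose v s := V (t s) (t' s); pose w s := W (t s) (t' s).
have [v1 w1 uvw] : [/\ forall s, `|v s| <= 1, forall s, `|w s| <= 1 &
    forall s, `|unit_dir e0 (t' s) - v s| + `|unit_dir e0 (t' s) + w s| <= 2 + del].
  by split => s; case: (VW (t s) (t' s)) => [[_ [? _]] [_ [? _]] /ltW].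
(* The factor 1 - del absorbs the error in \int |t'| ~ 1. *)
have scaled_in_slice k : simple_map k ->
    (forall s, slice setT normr (Phi (t s)) del (k s)) ->
    slice L1 normL1 integral_functional eps (fun s => ((1 - del) * `|t' s|) *: k s).
  move=> sk Sk; apply: (scaled_slice_integral_functional (e' := del) st' sk it').
  - by lra.
  - by move=> s; have [_ [? /ltW]] := Sk s.
  - by rewrite -/m; nra.
  - by rewrite -/m; nra.
have Sv := scaled_in_slice _ (simple_map2 V t_simple st')
  (fun s => let: And3 Sv _ _ := VW (t s) (t' s) in Sv).
have Sw := scaled_in_slice _ (simple_map2 W t_simple st')
  (fun s => let: And3 _ Sw _ := VW (t s) (t' s) in Sw).
have dist_ge0 := @L1_norm_ge0 _ _ _ mu X.
apply: le_lt_trans (lerD (dist_le dist_ge0 z Sv)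
  (dist_le dist_ge0 z (ex_intro2 _ _ _ Sw erefl))) _.
rewrite opprK.
apply: le_lt_trans (L1_norm_scaled_pair_le mu_complete Lz st'
  (simple_map2 V t_simple st') (simple_map2 W t_simple st') it' izt _ v1 w1 uvw) _.
  by lra.
rewrite -/m; nra.
Qed.

End integral_functional.

Theorem theorem5p1 (R : realType) (d : measure_display) (S : measurableType d)
  (mu : {measure set S -> \bar R}) (X : completeNormedModType R) :
  measure_is_complete mu -> sigma_finite setT mu ->
  GL X ->
  @GL_space R (S -> X) (@L1_set R d S mu X) (@L1_norm R d S mu X).
Proof.
move=> mu_complete _ GLX x Lx Nx eps eps0.
have [del [del0 del1 deleps]] :
    exists del : R, [/\ 0 < del, del <= 1 / 10 & 10 * del <= eps].
  exists (Num.min eps 1 / 10); split; first by rewrite divr_gt0 // lt_min eps0 ltr01.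
    by rewrite ler_pM2r ?invr_gt0 // ge_min lexx orbT.
  by rewrite mulrC divfK ?pnatr_eq0 // ge_min lexx.
have [e0 e01] := L1_norm_eq1_exists_unit Nx.
have [Phi [V [W [Phi_unit VW]]]] := GL_fibrewise GLX e01 del0.
have Phi_sphere u := (Phi_unit u).1.
have [t [st ixt xt]] := simple_dense mu_complete Lx del0.
have it := simple_approx_norm_rintegrable mu_complete Lx st ixt.
have /andP[m_lo _] := L1_norm_simple_approx mu_complete Lx it ixt.
rewrite Nx in m_lo.
exists (integral_functional mu Phi t); split; [|split].
- by apply: (integral_functional_dual_sphere mu_complete Phi_sphere st it); lra.
- split => //; split; first by rewrite Nx.
  apply: lt_le_trans (integral_functional_lower_bound (del := del) mu_complete
    Phi_sphere st Lx ixt _ _); first by rewrite Nx; lra.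
    by rewrite ltW //; lra.
  by move=> u; exact: le_slice_unit_dir (Phi_unit u).2.
- exact: (integral_functional_GL_bound mu_complete Phi_sphere st
    del0 del1 deleps VW).
Qed.
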